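(* For every conditional model $\mathfrak{M}$ satisfying the limit assumption, every world $w$, all formulas $\varphi,\psi$ and every finite set of formulas $\Gamma$: $\mathfrak{M},w\models\varphi\sqsubseteq^\Gamma\psi$ iff $$\mathfrak{M},w\models\bigwedge_{\gamma\in\Gamma^*}\Big(\gamma\rightarrow\bigwedge_{\lambda\subseteq\gamma}\Big[\Big(\bigwedge_{\lambda\subsetneq\lambda'\subseteq\gamma}\neg\Diamond(\varphi\wedge\lambda')\Big)\rightarrow\big((\varphi\wedge\lambda)\preceq(\psi\wedge\lambda)\big)\Big]\Big).$$ Consequently $\sqsubseteq^\Gamma$ is expressible using only $\preceq$ and Boolean connectives.
   Context: A conditional model is $\mathfrak{M}=(W,\preceq,V)$: $W\ne\emptyset$, $V(p)\subseteq W$ for each propositional variable, and for each $w\in W$ a set $W_w\subseteq W$ with $w\in W_w$ and a reflexive, transitive, total relation $\preceq_w$ on $W_w$ with $w\prec_w v$ for all $v\in W_w\setminus\{w\}$; the limit assumption requires these relations (and those below) to be well-founded. $A_\Gamma(u,v)=\{\gamma\in\Gamma:\mathfrak{M},u\models\gamma\iff\mathfrak{M},v\models\gamma\}$; on $W_w$, $u\sqsubseteq^\Gamma_w v$ iff $A_\Gamma(v,w)\subsetneq A_\Gamma(u,w)$, or $A_\Gamma(v,w)=A_\Gamma(u,w)$ and $u\preceq_w v$. $\mathfrak{M},w\models\varphi\preceq\psi$ iff for every $u\in W_w$ with $u\models\psi$ there is $v\in W_w$ with $v\models\varphi$ and $v\preceq_w u$; $\mathfrak{M},w\models\varphi\sqsubseteq^\Gamma\psi$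 is defined the same way with $\sqsubseteq^\Gamma_w$ in place of $\preceq_w$. $\varphi\prec\psi:=\neg(\psi\preceq\varphi)$, $\Diamond\varphi:=\varphi\prec\bot$ (true at $w$ iff some $u\in W_w$ satisfies $\varphi$). $\Gamma^*$ is the set of all conjunctions $\bigwedge_{\gamma\in\Gamma}\pm\gamma$ with each $\pm\gamma\in\{\gamma,\neg\gamma\}$. A conjunction is identified with its set of conjuncts, so $\lambda\subseteq\gamma$ ranges over subsets of the conjuncts of $\gamma$ (treated as conjunctions). *)

From Stdlib Require Import List Bool Classical.
Import ListNotations.


(** Conditional models. [Ww w] is the set W_w, [le w u v] is u ≼_w v. *)
Record model : Type := Model {
  W : Type;
  V : nat -> W -> Prop;
  Ww : W -> W -> Prop;
  le : W -> W -> W -> Prop;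
  Ww_refl : forall w, Ww w w;
  le_refl : forall w u, Ww w u -> le w u u;
  le_trans : forall w u v x, Ww w u -> Ww w v -> Ww w x ->
      le w u v -> le w v x -> le w u x;
  le_total : forall w u v, Ww w u -> Ww w v -> le w u v \/ le w v u;
  le_center : forall w v, Ww w v -> v <> w -> le w w v /\ ~ le w v w
}.

(** Formulas. [Sq G a b] is a ⊑^Γ b with Γ the (finite) list G. *)
Inductive form : Type :=
| Var (p : nat)
| Bot
| Neg (a : form)
| And (a b : form)
| Or (a b : form)
| Imp (a b : form)
| Pref (a b : form)
| Sq (G : list form) (a b : form).

(** A_Γ(x,w) ⊆ A_Γ(y,w), with Γ given by the list of truth sets Ps. *)
Definition Aincl (M : model) (Ps : list (W M -> Prop)) (w x y : W M) : Prop :=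
  Forall (fun P => (P x <-> P w) -> (P y <-> P w)) Ps.

Definition sqle (M : model) (Ps : list (W M -> Prop)) (w u v : W M) : Prop :=
  (Aincl M Ps w v u /\ ~ Aincl M Ps w u v)
  \/ (Aincl M Ps w v u /\ Aincl M Ps w u v /\ le M w u v).

Definition pref_holds (M : model) (R : W M -> W M -> W M -> Prop)
  (a b : W M -> Prop) (w : W M) : Prop :=
  forall u, Ww M w u -> b u -> exists v, Ww M w v /\ a v /\ R w v u.

Fixpoint sat (M : model) (f : form) (w : W M) {struct f} : Prop :=
  match f with
  | Var p => V M p w
  | Bot => False
  | Neg a => ~ sat M a w
  | And a b => sat M a w /\ sat M b w
  | Or a b => sat M a w \/ sat M b w
  | Imp a b => sat M a w -> sat M b w
  | Pref a b => pref_holds M (le M) (sat M a) (sat M b) w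
  | Sq G a b =>
      let fix satl (l : list form) : list (W M -> Prop) :=
        match l with
        | [] => []
        | g :: l' => sat M g :: satl l'
        end in
      pref_holds M (sqle M (satl G)) (sat M a) (sat M b) w
  end.

Definition limit_assumption (M : model) : Prop :=
  (forall w, well_founded
     (fun y x => Ww M w x /\ Ww M w y /\ le M w y x /\ ~ le M w x y)) /\
  (forall (G : list form) w, well_founded
     (fun y x => Ww M w x /\ Ww M w y /\
        sqle M (map (sat M) G) w y x /\ ~ sqle M (map (sat M) G) w x y)).

Definition Top : form := Neg Bot.
Definition bigAnd (l : list form) : form := fold_right And Top l.
(* ◇φ := φ ≺ ⊥ := ¬(⊥ ≼ φ) *)
Definition Dia (a : form) : form := Neg (Pref Bot a).

Fixpoint masks (n : nat) : list (list bool) :=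
  match n with
  | 0 => [[]]
  | S k => map (cons true) (masks k) ++ map (cons false) (masks k)
  end.

Fixpoint select {A : Type} (m : list bool) (l : list A) : list A :=
  match m, l with
  | b :: m', x :: l' => if b then x :: select m' l' else select m' l'
  | _, _ => []
  end.

Fixpoint mle (m m' : list bool) : bool :=
  match m, m' with
  | b :: r, b' :: r' => implb b b' && mle r r'
  | _, _ => true
  end.
Definition mlt (m m' : list bool) : bool := mle m m' && negb (mle m' m).

Definition lit (p : bool * form) : form :=
  if fst p then snd p else Neg (snd p).

(** The conjuncts ±γ of the element of Γ* given by sign vector s. *)
Definition literals (G : list form) (s : list bool) : list form :=
  map lit (combine s G).

(** The right-hand side of the theorem. γ ranges over Γ* (sign vectors s),
    λ ⊆ γ over masks m, λ ⊊ λ' ⊆ γ over masks m' with m < m'. *)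
Definition translation (G : list form) (a b : form) : form :=
  let n := length G in
  bigAnd (map (fun s =>
    Imp (bigAnd (literals G s))
        (bigAnd (map (fun m =>
           Imp (bigAnd (map (fun m' =>
                   Neg (Dia (And a (bigAnd (select m' (literals G s))))))
                 (filter (fun m' => mlt m m') (masks n))))
               (Pref (And a (bigAnd (select m (literals G s))))
                     (And b (bigAnd (select m (literals G s))))))
         (masks n))))
    (masks n)).

(* Write A x for the vector recording on which members of Γ the world x agrees
   with w, ordered pointwise; then u ⊑^Γ_w v iff A v < A u, or A v = A u and
   u ≼_w v.  A conjunction λ ⊆ γ of literals true at w holds at x iff the mask
   of λ lies below A x.  For a ψ-world u take λ := A u: either some φ-world
   has a strictly larger agreement vector (and is ⊑-below u outright), or the
   premise of the λ-conjunct holds and ≼ provides a φ-world of the same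
   agreement vector.  Conversely, a ⊑-witness v for u cannot have A v > A u
   when no φ-world satisfies a λ' ⊋ λ, so it is a ≼-witness satisfying λ. *)

From Stdlib Require Import List Bool Lia Classical ClassicalEpsilon.
Import ListNotations.

Lemma In_masks n m : In m (masks n) <-> length m = n.
Proof.
  revert m; induction n as [|n IH]; intros m; simpl.
  - split; [intros [<- | []]; reflexivity|].
    destruct m; [auto | discriminate].
  - rewrite in_app_iff, !in_map_iff. split.
    + intros [[m' [<- Hm']] | [m' [<- Hm']]]; simpl; f_equal; apply IH; exact Hm'.
    + destruct m as [|[|] m]; simpl; intros H; try discriminate; injection H as H.
      * left; exists m; split; [reflexivity | apply IH; exact H].
      * right; exists m; split; [reflexivity | apply IH; exact H].
Qed.

Lemma mle_refl m : mle m m = true.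
Proof. induction m as [|[|] m IH]; simpl; auto. Qed.

Lemma mle_trans a b c : length a <= length b ->
  mle a b = true -> mle b c = true -> mle a c = true.
Proof.
  revert b c; induction a as [|x a IH]; intros b c Hlen Hab Hbc; [reflexivity|].
  destruct b as [|y b]; [simpl in Hlen; lia|].
  destruct c as [|z c]; [reflexivity|].
  simpl in *. apply andb_true_iff in Hab as [Hxy Hab], Hbc as [Hyz Hbc].
  apply andb_true_iff; split.
  - destruct x, y, z; simpl in *; congruence.
  - apply (IH b); auto; lia.
Qed.

Section SameLength.

Variables a b c : list bool.
Hypotheses (Hab : length a = length b) (Hbc : length b = length c).

Lemma mle_mlt_trans : mle a b = true -> mlt b c = true -> mlt a c = true.
Proof.
  unfold mlt; intros H1 H2. apply andb_true_iff in H2 as [H2 H3].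
  apply andb_true_iff; split.
  - apply (mle_trans a b c); [lia|..]; auto.
  - apply negb_true_iff, not_true_iff_false. intros H4.
    apply negb_true_iff, not_true_iff_false in H3. apply H3.
    apply (mle_trans c a b); [lia|..]; auto.
Qed.

Lemma mlt_mle_trans : mlt a b = true -> mle b c = true -> mlt a c = true.
Proof.
  unfold mlt; intros H1 H2. apply andb_true_iff in H1 as [H1 H3].
  apply andb_true_iff; split.
  - apply (mle_trans a b c); [lia|..]; auto.
  - apply negb_true_iff, not_true_iff_false. intros H4.
    apply negb_true_iff, not_true_iff_false in H3. apply H3.
    apply (mle_trans b c a); [lia|..]; auto.
Qed.

End SameLength.

Section Agreement.

Variable M : model.
Variables (Ps : list (W M -> Prop)) (w : W M).

Definition agreement (x : W M) : list bool :=
  map (fun P => if excluded_middle_informative (P x <-> P w) then true else false) Ps.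

Lemma agreement_length x : length (agreement x) = length Ps.
Proof. apply length_map. Qed.

Lemma Aincl_agreement x y :
  Aincl M Ps w x y <-> mle (agreement x) (agreement y) = true.
Proof.
  unfold Aincl, agreement. induction Ps as [|P Ps' IH]; simpl.
  - split; auto.
  - rewrite Forall_cons_iff, andb_true_iff, IH.
    destruct (excluded_middle_informative (P x <-> P w)),
             (excluded_middle_informative (P y <-> P w)); simpl; intuition congruence.
Qed.

Lemma sqle_agreement u v : sqle M Ps w u v <->
  mlt (agreement v) (agreement u) = true \/
  (mle (agreement u) (agreement v) = true /\
   mle (agreement v) (agreement u) = true /\ le M w u v).
Proof.
  unfold sqle, mlt. rewrite !Aincl_agreement, andb_true_iff, negb_true_iff,
    <- not_true_iff_false. tauto.
Qed.

(* The translation read semantically: [m] is the mask of λ, and [x]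
   satisfies λ iff [mle m (agreement x)]. *)
Definition layered_pref (a b : W M -> Prop) : Prop :=
  forall m, length m = length Ps ->
  (forall m', length m' = length Ps -> mlt m m' = true ->
     forall x, Ww M w x -> ~ (a x /\ mle m' (agreement x) = true)) ->
  pref_holds M (le M)
    (fun x => a x /\ mle m (agreement x) = true)
    (fun x => b x /\ mle m (agreement x) = true) w.

Lemma sq_pref_layered a b :
  pref_holds M (sqle M Ps) a b w -> layered_pref a b.
Proof.
  intros Hsq m Hm Hmax u Hu [Hb Hmu].
  destruct (Hsq u Hu Hb) as [v [Hv [Ha Hvu]]].
  assert (Hlu := agreement_length u). assert (Hlv := agreement_length v).
  apply sqle_agreement in Hvu as [Hlt | [Hle [Hge Hvu]]].
  - exfalso. apply (Hmax (agreement v) Hlv) with v; [|exact Hv|].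
    + apply (mle_mlt_trans m (agreement u)); congruence || assumption.
    + split; [exact Ha | apply mle_refl].
  - exists v; repeat split; try assumption.
    apply (mle_trans m (agreement u)); [lia|..]; auto.
Qed.

Lemma layered_sq_pref a b :
  layered_pref a b -> pref_holds M (sqle M Ps) a b w.
Proof.
  intros Hlay u Hu Hb.
  assert (Hlu := agreement_length u).
  destruct (classic (exists v, Ww M w v /\ a v /\
                       mlt (agreement u) (agreement v) = true))
    as [[v [Hv [Ha Hlt]]] | Hnone].
  { exists v; repeat split; try assumption. apply sqle_agreement; left; exact Hlt. }
  destruct (Hlay (agreement u) Hlu) with u as [v [Hv [[Ha Hle] Hvu]]].
  - intros m' Hm' Hlt x Hx [Hax Hm'x]. apply Hnone; exists x; repeat split; auto.
    apply (mlt_mle_trans _ m'); rewrite ?agreement_length; auto.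
  - exact Hu.
  - split; [exact Hb | apply mle_refl].
  - exists v; repeat split; try assumption.
    apply sqle_agreement; right; repeat split; try assumption.
    apply not_false_iff_true; intros Hge.
    apply Hnone; exists v; repeat split; try assumption.
    unfold mlt; rewrite Hle, Hge; reflexivity.
Qed.

End Agreement.

(* The list of truth sets computed inside [sat] is [map (sat M) G] up to
   conversion. *)
Lemma sat_Sq M G a b w : sat M (Sq G a b) w <->
  pref_holds M (sqle M (map (sat M) G)) (sat M a) (sat M b) w.
Proof. reflexivity. Qed.

Lemma sat_bigAnd M l w : sat M (bigAnd l) w <-> Forall (fun f => sat M f w) l.
Proof.
  induction l as [|f l IH]; simpl.
  - split; auto.
  - rewrite Forall_cons_iff, IH. reflexivity.
Qed.

Lemma sat_Neg_Dia M f w :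
  sat M (Neg (Dia f)) w <-> (forall x, Ww M w x -> ~ sat M f x).
Proof.
  unfold Dia, pref_holds; cbn [sat]. split.
  - intros H x Hx Hf. apply H; intros Hbot.
    destruct (Hbot x Hx Hf) as [v [_ [[] _]]].
  - intros H Hbot. apply Hbot; intros u Hu Hf. contradiction (H u Hu Hf).
Qed.

Lemma literals_at M G w : exists s,
  length s = length G /\ Forall (fun f => sat M f w) (literals G s).
Proof.
  unfold literals. induction G as [|g G [s [Hs Hlit]]].
  - exists []; split; auto.
  - destruct (classic (sat M g w));
      [exists (true :: s) | exists (false :: s)]; simpl; auto.
Qed.

(* Since γ holds at w, a conjunct ±g of γ holds at x iff x agrees with w on g. *)
Lemma sat_select_literals M G s w m x :
  length s = length G -> Forall (fun f => sat M f w) (literals G s) ->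
  Forall (fun f => sat M f x) (select m (literals G s)) <->
  mle m (agreement M (map (sat M) G) w x) = true.
Proof.
  unfold literals, agreement.
  revert s m; induction G as [|g G IH]; intros s m Hs Hw.
  - destruct s, m; simpl; split; auto.
  - destruct s as [|sg s]; [discriminate|]. injection Hs as Hs.
    simpl in Hw |- *. apply Forall_cons_iff in Hw as [Hg Hw].
    destruct m as [|[|] m]; simpl.
    + split; auto.
    + rewrite Forall_cons_iff, IH by assumption.
      destruct (excluded_middle_informative (sat M g x <-> sat M g w));
        unfold lit in *; destruct sg; simpl in *; intuition congruence.
    + rewrite IH by assumption. reflexivity.
Qed.

Lemma pref_holds_ext M R (a a' b b' : W M -> Prop) w :
  (forall x, Ww M w x -> (a x <-> a' x)) ->
  (forall x, Ww M w x -> (b x <-> b' x)) ->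
  pref_holds M R a b w -> pref_holds M R a' b' w.
Proof.
  intros Ha Hb H u Hu Hbu. apply Hb in Hbu; [|exact Hu].
  destruct (H u Hu Hbu) as [v [Hv [Hav HR]]].
  exists v; repeat split; [exact Hv | apply Ha; assumption | exact HR].
Qed.

Definition maximality_premise (G : list form) (a : form) (s m : list bool) : form :=
  bigAnd (map (fun m' => Neg (Dia (And a (bigAnd (select m' (literals G s))))))
              (filter (fun m' => mlt m m') (masks (length G)))).

Definition translation_layer (G : list form) (a b : form) (s : list bool) : form :=
  bigAnd (map (fun m =>
    Imp (maximality_premise G a s m)
        (Pref (And a (bigAnd (select m (literals G s))))
              (And b (bigAnd (select m (literals G s))))))
    (masks (length G))).

Lemma translation_layers G a b : translation G a b =
  bigAnd (map (fun s => Imp (bigAnd (literals G s)) (translation_layer G a b s))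
              (masks (length G))).
Proof. reflexivity. Qed.

Section Translation.

Variables (M : model) (G : list form) (a b : form) (w : W M) (s : list bool).
Hypotheses (Hs : length s = length G)
           (Hw : Forall (fun f => sat M f w) (literals G s)).

Let A := agreement M (map (sat M) G) w.

Lemma sat_and_select f m x :
  sat M (And f (bigAnd (select m (literals G s)))) x <->
  sat M f x /\ mle m (A x) = true.
Proof.
  cbn [sat]. rewrite sat_bigAnd, (sat_select_literals M G s w) by assumption.
  reflexivity.
Qed.

Lemma sat_maximality_premise m :
  sat M (maximality_premise G a s m) w <->
  (forall m', length m' = length G -> mlt m m' = true ->
     forall x, Ww M w x -> ~ (sat M a x /\ mle m' (A x) = true)).
Proof.
  unfold maximality_premise. rewrite sat_bigAnd, Forall_map, Forall_forall.
  setoid_rewrite filter_In. setoid_rewrite In_masks.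
  setoid_rewrite sat_Neg_Dia. setoid_rewrite sat_and_select. firstorder.
Qed.

Lemma sat_translation_layer :
  sat M (translation_layer G a b s) w <->
  layered_pref M (map (sat M) G) w (sat M a) (sat M b).
Proof.
  unfold translation_layer, layered_pref.
  rewrite length_map, sat_bigAnd, Forall_map, Forall_forall.
  setoid_rewrite In_masks. cbn [sat]. setoid_rewrite sat_maximality_premise.
  split; intros H m Hm Hmax; specialize (H m Hm Hmax); revert H;
    apply pref_holds_ext; intros x _;
    rewrite sat_bigAnd, (sat_select_literals M G s w) by assumption; reflexivity.
Qed.

End Translation.

Lemma sat_translation M G a b w :
  sat M (translation G a b) w <->
  layered_pref M (map (sat M) G) w (sat M a) (sat M b).
Proof.
  rewrite translation_layers, sat_bigAnd, Forall_map, Forall_forall.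
  setoid_rewrite In_masks. cbn [sat]. split.
  - intros H. destruct (literals_at M G w) as [s [Hs Hw]].
    apply (sat_translation_layer M G a b w s Hs Hw), H, sat_bigAnd; assumption.
  - intros H s Hs Hw. apply sat_bigAnd in Hw.
    apply (sat_translation_layer M G a b w s Hs Hw), H.
Qed.

Theorem mainTheorem7 :
  forall (M : model), limit_assumption M ->
  forall (w : W M) (phi psi : form) (G : list form), NoDup G ->
    (sat M (Sq G phi psi) w <-> sat M (translation G phi psi) w).
Proof.
  intros M _ w phi psi G _.
  rewrite sat_Sq, sat_translation.
  split; [apply sq_pref_layered | apply layered_sq_pref].
Qed.
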